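(* Let $q$ be a prime power, $n=q^4-1$, and let $x=(a_0,a_1,a_2,a_3)\in\{1,\ldots,n-1\}$ with $I_x=\{x\}$. Then $I_x$ is a symmetric coset if and only if $a_2+a_3=q-1$, and $I_x$ is an SR-asymmetric coset if and only if $a_2+a_3>q-1$.
   Context: Identify $\mathbb{Z}_n$ with $\{0,\ldots,n-1\}$, all arithmetic modulo $n$. The $q$-adic 4-tuple $(a_0,a_1,a_2,a_3)$ denotes $a_0+a_1q+a_2q^2+a_3q^3$ with $0\le a_i<q$. The cyclotomic coset of $x$ with respect to $q^2$ is $I_x=\{x,\,q^2x\bmod n\}$; its minimal representative is its least element. The (Hermitian) reciprocal coset of $I_x$ is $I_{n-qx}$ (with $n-qx$ reduced modulo $n$). $I_x$ is symmetric if $I_{n-qx}=I_x$ and asymmetric otherwise. If $I_x$ is asymmetric with reciprocal coset $I_y$, with $x,y$ the minimal representatives and $x<y$, then $I_x$ is the FR-asymmetric coset and $I_y$ the SR-asymmetric coset of the pair. *)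

From mathcomp Require Import all_boot.
Set Implicit Arguments. Unset Strict Implicit. Unset Printing Implicit Defensive.

Definition prime_power (q : nat) : Prop :=
  exists p k, prime p /\ 0 < k /\ q = p ^ k.

Definition nn (q : nat) : nat := q ^ 4 - 1.

Definition digit (q x i : nat) : nat := (x %/ q ^ i) %% q.

(* cyclotomic coset of x w.r.t. q^2 modulo n: I_x = {x, q^2 x mod n} *)
Definition coset (q x : nat) : seq nat :=
  [:: x %% nn q; (q ^ 2 * x) %% nn q].

Definition minrep (q x : nat) : nat := minn (x %% nn q) ((q ^ 2 * x) %% nn q).

(* index of the (Hermitian) reciprocal coset: I_{n - qx}, reduced mod n *)
Definition recip (q x : nat) : nat := (nn q - (q * x) %% nn q) %% nn q.

Definition symmetric_coset (q x : nat) : Prop := coset q (recip q x) =i coset q x.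

Definition asymmetric_coset (q x : nat) : Prop := ~ symmetric_coset q x.

Definition SR_asymmetric_coset (q x : nat) : Prop :=
  asymmetric_coset q x /\ minrep q (recip q x) < minrep q x.

(** On a singleton coset [I_x = {x}] we have [q^2 x = x] modulo
    [n = (q^2 - 1)(q^2 + 1)], i.e. [x = a (q^2 + 1)] with [0 < a < q^2 - 1];
    the digits [a_2, a_3] of [x] are the two [q]-adic digits of [a].
    Multiplying by [q] swaps these two digits of [a] modulo [q^2 - 1], so the
    reciprocal coset is again a singleton, [I_{n - qx} = {(q^2 - 1 - a') (q^2 + 1)}]
    with [a' = a_2 q + a_3].  Since [a + a' = (a_2 + a_3)(q + 1)] and
    [q^2 - 1 = (q - 1)(q + 1)], comparing [n - qx] with [x] amounts to comparing
    [a_2 + a_3] with [q - 1]. *)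

From mathcomp Require Import all_boot zify.

Set Implicit Arguments.
Unset Strict Implicit.
Unset Printing Implicit Defensive.

Definition swap_digits (q a : nat) : nat := a %% q * q + a %/ q.

Lemma sqrB1 m : m ^ 2 - 1 = (m - 1) * (m + 1).
Proof. by rewrite -subn_sqr exp1n. Qed.

Lemma nn_factor q : nn q = (q ^ 2 - 1) * (q ^ 2 + 1).
Proof. by rewrite -sqrB1 -expnM. Qed.

Lemma nn_gt0_gt1 q : 0 < nn q -> 1 < q.
Proof. by case: q => [|[|]]. Qed.

Lemma digit0 q a : digit q a 0 = a %% q.
Proof. by rewrite /digit expn0 divn1. Qed.

Lemma digit1 q a : a < q ^ 2 -> digit q a 1 = a %/ q.
Proof.
case: q => [|q] // a_lt.
by rewrite /digit expn1 modn_small // ltn_divLR // mulnn.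
Qed.

Lemma digit_mul_sqrS q a i :
  a < q ^ 2 -> digit q (a * (q ^ 2 + 1)) i.+2 = digit q a i.
Proof.
move=> a_lt; have q2_gt0 : 0 < q ^ 2 by apply: leq_ltn_trans a_lt.
rewrite /digit -[i.+2]addn2 expnD [_ * q ^ 2]mulnC divnMA mulnDr muln1 divnMDl //.
by rewrite (divn_small a_lt) addn0.
Qed.

Lemma addn_swap_digits q a : a + swap_digits q a = (a %% q + a %/ q) * (q + 1).
Proof. by rewrite {1}(divn_eq a q) /swap_digits; lia. Qed.

Section SingletonCosets.

Variable q : nat.
Hypothesis q_gt1 : 1 < q.

Local Notation Q := (q ^ 2).

Let Q_gt1 : 1 < Q.
Proof. by rewrite -(exp1n 2) ltn_exp2r. Qed.

Let q1_gt0 : 0 < q + 1. Proof. by rewrite addn1. Qed.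
Let Q1_gt0 : 0 < Q + 1. Proof. by rewrite addn1. Qed.

Let nn_gt0 : 0 < nn q.
Proof. by rewrite nn_factor muln_gt0 subn_gt0 Q_gt1 Q1_gt0. Qed.

Lemma eq_mul_sqr_mod y : (Q * y == y %[mod nn q]) = (Q + 1 %| y).
Proof.
rewrite eqn_mod_dvd; last by rewrite leq_pmull // ltnW.
by rewrite -{2}(mul1n y) -mulnBl nn_factor dvdn_pmul2l // subn_gt0.
Qed.

Lemma dvdn_coset1 y : y < nn q -> coset q y =i [:: y] -> Q + 1 %| y.
Proof.
move=> y_lt y_fixed; rewrite -eq_mul_sqr_mod (modn_small y_lt).
by have := y_fixed ((Q * y) %% nn q); rewrite !inE eqxx orbT => /esym.
Qed.

Lemma coset_dvdn y : y < nn q -> Q + 1 %| y -> coset q y = [:: y; y].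
Proof.
by move=> y_lt; rewrite -eq_mul_sqr_mod => /eqP Qy; rewrite /coset Qy modn_small.
Qed.

Lemma minrep_dvdn y : y < nn q -> Q + 1 %| y -> minrep q y = y.
Proof.
by move=> y_lt /(coset_dvdn y_lt); rewrite /minrep /coset => -[-> ->]; apply: minnn.
Qed.

Lemma recip_lt y : recip q y < nn q.
Proof. exact: ltn_pmod. Qed.

Lemma dvdn_recip y : Q + 1 %| y -> Q + 1 %| recip q y.
Proof.
have Q1_nn : Q + 1 %| nn q by rewrite nn_factor dvdn_mull.
have dvdn_modnn m : (Q + 1 %| m %% nn q) = (Q + 1 %| m).
  by rewrite /dvdn modn_dvdm.
by move=> y_dvd; rewrite /recip dvdn_modnn dvdn_sub // dvdn_modnn dvdn_mull.
Qed.

Section FixedPoint.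

Variable y : nat.
Hypotheses (y_lt : y < nn q) (y_dvd : Q + 1 %| y).

Let recip_coset : coset q (recip q y) = [:: recip q y; recip q y].
Proof. exact: coset_dvdn (recip_lt y) (dvdn_recip y_dvd). Qed.

Lemma symmetric_cosetE : symmetric_coset q y <-> recip q y = y.
Proof.
rewrite /symmetric_coset recip_coset coset_dvdn //; split=> [|->] // sym.
by have := sym (recip q y); rewrite !inE eqxx /= orbb => /esym/eqP.
Qed.

Lemma SR_asymmetric_cosetE : SR_asymmetric_coset q y <-> recip q y < y.
Proof.
rewrite /SR_asymmetric_coset /asymmetric_coset symmetric_cosetE.
rewrite (minrep_dvdn y_lt y_dvd) (minrep_dvdn (recip_lt y) (dvdn_recip y_dvd)).
by split=> [[] | lt_ry] //; split=> // eq_ry; rewrite eq_ry ltnn in lt_ry.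
Qed.

End FixedPoint.

Lemma swap_digits_gt0 a : 0 < a -> 0 < swap_digits q a.
Proof. by rewrite {1}(divn_eq a q) /swap_digits; move: (a %/ q) (a %% q) => d1 d0; nia. Qed.

Lemma swap_digits_lt a : a < Q - 1 -> swap_digits q a < Q - 1.
Proof.
have d0_lt := ltn_pmod a (ltnW q_gt1).
rewrite {1}(divn_eq a q) /swap_digits -mulnn => a_lt.
have : a %/ q < q by rewrite ltn_divLR ?mulnn; lia.
by move: a_lt d0_lt; move: (a %/ q) (a %% q) => d1 d0; nia.
Qed.

Lemma mulq_mod_sqrB1 a : a < Q - 1 -> (q * a) %% (Q - 1) = swap_digits q a.
Proof.
move=> a_lt; have mulqE : q * a = a %/ q * (Q - 1) + swap_digits q a.
  rewrite {1}(divn_eq a q) /swap_digits -mulnn; nia.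
by rewrite mulqE modnMDl modn_small // swap_digits_lt.
Qed.

Lemma recip_mul a : 0 < a < Q - 1 ->
  recip q (a * (Q + 1)) = (Q - 1 - swap_digits q a) * (Q + 1).
Proof.
move=> /andP[a_gt0 a_lt]; have s_gt0 := swap_digits_gt0 a_gt0.
rewrite /recip mulnA nn_factor -muln_modl mulq_mod_sqrB1 // -mulnBl modn_small //.
by rewrite (ltn_pmul2r Q1_gt0) ltn_subrL s_gt0 subn_gt0.
Qed.

Lemma recip_mul_eq a : 0 < a < Q - 1 ->
  (recip q (a * (Q + 1)) == a * (Q + 1)) = (a %% q + a %/ q == q - 1).
Proof.
move=> a_bounds; have /andP[_ a_lt] := a_bounds.
have s_le : swap_digits q a <= Q - 1 by rewrite ltnW ?swap_digits_lt.
rewrite recip_mul // (eqn_pmul2r Q1_gt0) -[RHS](eqn_pmul2r q1_gt0).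
by rewrite -addn_swap_digits -sqrB1; apply/eqP/eqP; lia.
Qed.

Lemma recip_mul_lt a : 0 < a < Q - 1 ->
  (recip q (a * (Q + 1)) < a * (Q + 1)) = (q - 1 < a %% q + a %/ q).
Proof.
move=> a_bounds; have /andP[_ a_lt] := a_bounds.
have s_le : swap_digits q a <= Q - 1 by rewrite ltnW ?swap_digits_lt.
rewrite recip_mul // (ltn_pmul2r Q1_gt0) ltn_subLR // addnC addn_swap_digits.
by rewrite sqrB1 (ltn_pmul2r q1_gt0).
Qed.

End SingletonCosets.

Theorem mainTheorem8 (q x : nat) :
  prime_power q ->
  1 <= x <= nn q - 1 ->
  coset q x =i [:: x] ->
  (symmetric_coset q x <-> digit q x 2 + digit q x 3 = q - 1) /\
  (SR_asymmetric_coset q x <-> digit q x 2 + digit q x 3 > q - 1).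
Proof.
move=> _ /andP[x_gt0 x_le] x_fixed.
have x_lt : x < nn q by lia.
have q_gt1 : 1 < q by apply: nn_gt0_gt1; lia.
have x_dvd := dvdn_coset1 q_gt1 x_lt x_fixed.
have [a xE] := dvdnP x_dvd.
have a_bounds : 0 < a < q ^ 2 - 1.
  by move: x_gt0 x_lt; rewrite xE nn_factor muln_gt0 ltn_pmul2r ?addn1 // => /andP[->].
have a_lt_sqr : a < q ^ 2 by lia.
rewrite symmetric_cosetE // SR_asymmetric_cosetE // xE.
rewrite !digit_mul_sqrS // digit0 digit1 //.
rewrite [_ = q - 1](rwP eqP) -recip_mul_eq // -recip_mul_lt //.
by split=> //; split=> /eqP.
Qed.
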